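(* A triple $(A_1,A_2,A_3)\in V_3$ is similar to an upper triangular $3$-matrix if and only if $\sigma_{12}=\sigma_{13}=\sigma_{23}=\Delta_{123}=0$.
   Context: $V_3=(M_{2\times2}(\mathbb{C}))^{\times 3}$ with $GL(2,\mathbb{C})$ acting by simultaneous conjugation; similar means same orbit; upper triangular $3$-matrix means all components upper triangular. With $t_j=\mathsf{tr}(A_j)$, $t_{jk}=\mathsf{tr}(A_jA_k)$, $t_{jkl}=\mathsf{tr}(A_jA_kA_l)$, define $\tau_{jk}=t_{jk}-\tfrac12t_jt_k$, $\sigma_{jk}=\tau_{jk}^2-\tau_{jj}\tau_{kk}$ and $\Delta_{jkl}=(t_{jkl}-t_{lkj})^2$. *)

From HB Require Import structures.
From mathcomp Require Import all_boot all_order all_algebra.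
From mathcomp Require Import complex.
From mathcomp Require Import reals.
Set Implicit Arguments. Unset Strict Implicit. Unset Printing Implicit Defensive.
Import Order.TTheory GRing.Theory Num.Theory.
Local Open Scope ring_scope.

Section V3.
Variable F : fieldType.

Definition upper_tri (A : 'M[F]_2) : Prop :=
  forall i j : 'I_2, (j < i)%N -> A i j = 0.

Definition similar_to_upper_tri (A1 A2 A3 : 'M[F]_2) : Prop :=
  exists P : 'M[F]_2, P \in unitmx /\
    [/\ upper_tri (P *m A1 *m invmx P),
        upper_tri (P *m A2 *m invmx P) &
        upper_tri (P *m A3 *m invmx P)].

Definition tau (X Y : 'M[F]_2) : F :=
  \tr (X *m Y) - 2^-1 * (\tr X * \tr Y).

Definition sigma (X Y : 'M[F]_2) : F :=
  tau X Y ^+ 2 - tau X X * tau Y Y.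

Definition Delta (X Y Z : 'M[F]_2) : F :=
  (\tr (X *m Y *m Z) - \tr (Z *m Y *m X)) ^+ 2.
End V3.

From HB Require Import structures.
From mathcomp Require Import all_boot all_order all_algebra.
From mathcomp Require Import complex reals.
From mathcomp Require Import ring.

(* The eigenform q_A of A in M_2(F) is a binary quadratic form whose nonzero
   roots are the eigenvectors of A, so A_1, A_2, A_3 are simultaneously
   triangularizable iff their eigenforms have a common nonzero root.  In
   coefficients, sigma_jk is the resultant of q_{A_j} and q_{A_k}, and Delta_123
   is the square of the determinant of the three coefficient vectors.  Both are
   conjugation invariants vanishing on upper triangular triples.  Conversely,
   over an algebraically closed field every form splits into linear factors, so
   a vanishing resultant yields a common root of two of the forms, and a
   vanishing determinant forces the third form to vanish there too. *)

Set Implicit Arguments.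
Unset Strict Implicit.
Unset Printing Implicit Defensive.

Import GRing.Theory Num.Theory.
Local Open Scope ring_scope.

Local Notation i0 := (@ord0 1).
Local Notation i1 := (@ord_max 1).

Section TwoByTwo.
Variable R : comPzRingType.

Lemma ord2P (i : 'I_2) : i = i0 \/ i = i1.
Proof. by case: i => -[|[|m]] Hi //; [left|right]; apply/val_inj. Qed.

Lemma mxtrace2 (A : 'M[R]_2) : \tr A = A i0 i0 + A i1 i1.
Proof. by rewrite /mxtrace big_ord_recl big_ord1; congr (_ + A _ _); apply/val_inj. Qed.

Lemma mulmx2E (A B : 'M[R]_2) i j : (A *m B) i j = A i i0 * B i0 j + A i i1 * B i1 j.
Proof. by rewrite mxE big_ord_recl big_ord1; congr (_ + A _ _ * B _ _); apply/val_inj. Qed.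

Lemma det_mx2 (A : 'M[R]_2) : \det A = A i0 i0 * A i1 i1 - A i0 i1 * A i1 i0.
Proof.
rewrite (expand_det_row _ i0) big_ord_recl big_ord1 /cofactor !det_mx11 !mxE /=.
have lift_i0 (j : 'I_1) : lift i0 j = i1 by apply/val_inj; rewrite /= (ord1 j).
have lift_i1 (j : 'I_1) : lift i1 j = i0 by apply/val_inj; rewrite /= (ord1 j).
rewrite !lift_i0 lift_i1 /= expr0 expr1; ring.
Qed.
End TwoByTwo.

Section QuadraticForms.
Variable F : fieldType.

(* The form a X^2 + b XY + c Y^2 is identified with its coefficient vector
   (a, b, c) in F^3; qdot and qcross are the dot and cross products there, and
   qmono x y is the vector of monomials at (x, y). *)
Record qform := QForm { qa : F; qb : F; qc : F }.

Definition qdot (u v : qform) : F := qa u * qa v + qb u * qb v + qc u * qc v.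

Definition qcross (u v : qform) : qform :=
  QForm (qb u * qc v - qc u * qb v) (qc u * qa v - qa u * qc v)
        (qa u * qb v - qb u * qa v).

Definition qmono (x y : F) : qform := QForm (x ^+ 2) (x * y) (y ^+ 2).

Definition qeval (q : qform) (x y : F) : F := qdot q (qmono x y).

Definition qdet (q r s : qform) : F := qdot (qcross q r) s.

Definition qres (q r : qform) : F :=
  (qa q * qc r - qc q * qa r) ^+ 2
  - (qa q * qb r - qb q * qa r) * (qb q * qc r - qc q * qb r).

Definition qform_of_roots (x1 y1 x2 y2 : F) : qform :=
  QForm (y1 * y2) (- (y1 * x2 + x1 * y2)) (x1 * x2).

Lemma qdotC u v : qdot u v = qdot v u.
Proof. by rewrite /qdot; ring. Qed.

Lemma qeval_of_roots x1 y1 x2 y2 x y :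
  qeval (qform_of_roots x1 y1 x2 y2) x y = (y1 * x - x1 * y) * (y2 * x - x2 * y).
Proof. rewrite /qeval /qdot /=; ring. Qed.

Lemma qres_of_roots x1 y1 x2 y2 r :
  qres (qform_of_roots x1 y1 x2 y2) r = qeval r x1 y1 * qeval r x2 y2.
Proof. rewrite /qres /qeval /qdot /=; ring. Qed.

Lemma qform_eq0 q :
  ~~ [|| qa q != 0, qb q != 0 | qc q != 0] -> q = QForm 0 0 0.
Proof. by case: q => a b c /=; rewrite !negb_or !negbK => /and3P[/eqP-> /eqP-> /eqP->]. Qed.

Lemma qcross_qcross_eq0 q r m :
  qdot q m = 0 -> qdot r m = 0 -> qcross (qcross q r) m = QForm 0 0 0.
Proof.
move=> qm0 rm0.
have -> : qcross (qcross q r) m =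
    QForm (qdot q m * qa r - qdot r m * qa q) (qdot q m * qb r - qdot r m * qb q)
          (qdot q m * qc r - qdot r m * qc q).
  by rewrite /qcross /qdot /=; congr QForm; ring.
by rewrite qm0 rm0 !mul0r subrr.
Qed.

Lemma qdot_eq0_parallel w m u :
  [|| qa w != 0, qb w != 0 | qc w != 0] -> qcross w m = QForm 0 0 0 ->
  qdot w u = 0 -> qdot m u = 0.
Proof.
case: w m u => [w0 w1 w2] [m0 m1 m2] [u0 u1 u2] /= w_nz [c0 c1 c2].
rewrite /qdot /= => wu0.
case/or3P: w_nz => wi_nz; apply: (mulfI wi_nz); rewrite mulr0.
- transitivity (m0 * (w0 * u0 + w1 * u1 + w2 * u2)
                + u1 * (w0 * m1 - w1 * m0) - u2 * (w2 * m0 - w0 * m2)); first ring.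
  by rewrite wu0 c1 c2; ring.
- transitivity (m1 * (w0 * u0 + w1 * u1 + w2 * u2)
                - u0 * (w0 * m1 - w1 * m0) + u2 * (w1 * m2 - w2 * m1)); first ring.
  by rewrite wu0 c0 c2; ring.
- transitivity (m2 * (w0 * u0 + w1 * u1 + w2 * u2)
                + u0 * (w2 * m0 - w0 * m2) - u1 * (w1 * m2 - w2 * m1)); first ring.
  by rewrite wu0 c0 c1; ring.
Qed.

End QuadraticForms.

Section ClosedField.
Variable F : closedFieldType.
Implicit Types q r : qform F.

Lemma qform_factor q :
  exists x1 y1 x2 y2 : F, (x1, y1) != (0, 0) /\ q = qform_of_roots x1 y1 x2 y2.
Proof.
case: q => a b c; have [-> | a_nz] := eqVneq a 0.
  exists 1, 0, c, (- b); split; first by rewrite xpair_eqE oner_eq0.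
  by rewrite /qform_of_roots; congr QForm; ring.
have [t t_root] := @solve_monicpoly F 2 (nth 0 [:: - (c / a); - (b / a)]) isT.
rewrite !big_ord_recr big_ord0 /= in t_root.
have at2 : a * t ^+ 2 = - c - b * t by rewrite t_root; field.
exists t, 1, (- b - a * t), a; split; first by rewrite xpair_eqE oner_eq0 andbF.
rewrite /qform_of_roots; congr QForm; [ring | ring |].
by transitivity (- (a * t ^+ 2) - b * t); [rewrite at2; ring | ring].
Qed.

Lemma qres_eq0_common_root q r : qres q r = 0 ->
  exists x y : F, (x, y) != (0, 0) /\ qeval q x y = 0 /\ qeval r x y = 0.
Proof.
have [x1 [y1 [x2 [y2 [xy1_nz ->]]]]] := qform_factor q.
rewrite qres_of_roots => /eqP; rewrite mulf_eq0 => /orP[/eqP r1 | /eqP r2].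
  by exists x1, y1; rewrite qeval_of_roots r1; do 2!split=> //; ring.
have [[-> ->] | xy2_nz] := eqVneq (x2, y2) (0, 0); last first.
  by exists x2, y2; rewrite qeval_of_roots r2; do 2!split=> //; ring.
have [u1 [v1 [u2 [v2 [uv1_nz ->]]]]] := qform_factor r.
by exists u1, v1; rewrite !qeval_of_roots; do 2!split=> //; ring.
Qed.

Lemma common_root3 q1 q2 q3 :
  qres q1 q2 = 0 -> qres q1 q3 = 0 -> qres q2 q3 = 0 -> qdet q1 q2 q3 = 0 ->
  exists x y : F, (x, y) != (0, 0) /\
    [/\ qeval q1 x y = 0, qeval q2 x y = 0 & qeval q3 x y = 0].
Proof.
move=> r12 r13 r23 d0.
(* If q1 x q2 <> 0, the monomial vector of a common root of q1 and q2 is parallel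
   to q1 x q2, whose dot product with q3 is qdet; if q1 x q2 = 0, q2 is a multiple
   of q1. *)
have [q1_nz | /qform_eq0 q1_0] := boolP [|| qa q1 != 0, qb q1 != 0 | qc q1 != 0]; last first.
  have [x [y [xy_nz [e2 e3]]]] := qres_eq0_common_root r23.
  by exists x, y; split=> //; split=> //; rewrite q1_0 /qeval /qdot /=; ring.
have [w_nz | /qform_eq0 w_0] := boolP
  [|| qa (qcross q1 q2) != 0, qb (qcross q1 q2) != 0 | qc (qcross q1 q2) != 0].
  have [x [y [xy_nz [e1 e2]]]] := qres_eq0_common_root r12.
  exists x, y; split=> //; split=> //.
  rewrite /qeval qdotC; apply: (qdot_eq0_parallel w_nz _ d0).
  exact: qcross_qcross_eq0.
have [x [y [xy_nz [e1 e3]]]] := qres_eq0_common_root r13.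
by exists x, y; split=> //; split=> //; apply: (qdot_eq0_parallel q1_nz w_0 e1).
Qed.

End ClosedField.

Section Conjugation.
Variable R : comUnitRingType.

Lemma mxtrace_conj n (P X : 'M[R]_n) : P \in unitmx -> \tr (P *m X *m invmx P) = \tr X.
Proof. by move=> P_unit; rewrite mxtrace_mulC mulmxA mulVmx // mul1mx. Qed.

Lemma mulmx_conj n (P X Y : 'M[R]_n) : P \in unitmx ->
  (P *m X *m invmx P) *m (P *m Y *m invmx P) = P *m (X *m Y) *m invmx P.
Proof. by move=> P_unit; rewrite !mulmxA mulmxKV. Qed.

End Conjugation.

Section Eigenform.
Variable F : fieldType.
Implicit Types A B C P U V W : 'M[F]_2.

(* qeval (eigenform A) x y = det [v | A v] for v = (x, y), so its nonzero roots are
   the eigenvectors of A. *)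
Definition eigenform A : qform F := QForm (A i1 i0) (A i1 i1 - A i0 i0) (- A i0 i1).

Lemma sigma_qres A B : (2 : F) != 0 -> sigma A B = qres (eigenform A) (eigenform B).
Proof. by move=> two_nz; rewrite /sigma /tau /qres !mxtrace2 !mulmx2E /=; field. Qed.

Lemma Delta_qdet A B C :
  Delta A B C = qdet (eigenform A) (eigenform B) (eigenform C) ^+ 2.
Proof.
by rewrite /Delta /qdet /qdot /qcross /= !mxtrace2 !mulmx2E; congr (_ ^+ 2); ring.
Qed.

Lemma sigma_conj P A B : P \in unitmx ->
  sigma (P *m A *m invmx P) (P *m B *m invmx P) = sigma A B.
Proof. by move=> P_unit; rewrite /sigma /tau !mulmx_conj // !mxtrace_conj. Qed.

Lemma Delta_conj P A B C : P \in unitmx ->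
  Delta (P *m A *m invmx P) (P *m B *m invmx P) (P *m C *m invmx P) = Delta A B C.
Proof. by move=> P_unit; rewrite /Delta !mulmx_conj // !mxtrace_conj. Qed.

Lemma upper_tri2P A : upper_tri A <-> A i1 i0 = 0.
Proof.
split=> [A_ut | A10 i j]; first exact: A_ut.
by case: (ord2P i) => ->; case: (ord2P j) => ->.
Qed.

Lemma sigma_upper_tri U V : (2 : F) != 0 ->
  U i1 i0 = 0 -> V i1 i0 = 0 -> sigma U V = 0.
Proof. by move=> two_nz U10 V10; rewrite sigma_qres // /qres /= U10 V10; ring. Qed.

Lemma Delta_upper_tri U V W :
  U i1 i0 = 0 -> V i1 i0 = 0 -> W i1 i0 = 0 -> Delta U V W = 0.
Proof.
by move=> U10 V10 W10; rewrite Delta_qdet /qdet /qdot /qcross /= U10 V10 W10; ring.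
Qed.

Lemma sigma_Delta_eq0_of_similar A1 A2 A3 : (2 : F) != 0 ->
  similar_to_upper_tri A1 A2 A3 ->
  [/\ sigma A1 A2 = 0, sigma A1 A3 = 0, sigma A2 A3 = 0 & Delta A1 A2 A3 = 0].
Proof.
move=> two_nz [P [P_unit [/upper_tri2P u1 /upper_tri2P u2 /upper_tri2P u3]]].
rewrite -(sigma_conj A1 A2 P_unit) -(sigma_conj A1 A3 P_unit).
rewrite -(sigma_conj A2 A3 P_unit) -(Delta_conj A1 A2 A3 P_unit).
by split; [apply: sigma_upper_tri.. | apply: Delta_upper_tri].
Qed.

Lemma det_mulmx_conj10 P A : P \in unitmx ->
  \det P * (P *m A *m invmx P) i1 i0 = qeval (eigenform A) (P i1 i1) (- P i1 i0).
Proof.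
move=> P_unit; move: (P *m A *m invmx P) (mulmxKV P_unit (P *m A)) => B BP.
have e0 : (B *m P) i1 i0 = (P *m A) i1 i0 by rewrite BP.
have e1 : (B *m P) i1 i1 = (P *m A) i1 i1 by rewrite BP.
rewrite !mulmx2E in e0 e1.
rewrite det_mx2 /qeval /qdot /=.
transitivity (P i1 i1 * (B i1 i0 * P i0 i0 + B i1 i1 * P i1 i0)
              - P i1 i0 * (B i1 i0 * P i0 i1 + B i1 i1 * P i1 i1)); first ring.
by rewrite e0 e1; ring.
Qed.

Lemma unitmx_with_row1 (x y : F) : (x, y) != (0, 0) ->
  exists P, [/\ P \in unitmx, P i1 i0 = - y & P i1 i1 = x].
Proof.
move=> xy_nz; pose a : F := (x != 0)%:R; pose b : F := (x == 0)%:R.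
exists (\matrix_(i, j) if i == i0 then (if j == i0 then a else b)
                        else (if j == i0 then - y else x)).
rewrite unitmxE det_mx2 !mxE /= unitfE; split=> //.
rewrite /a /b; have [x0 | x_nz] := eqVneq x 0.
  by move: xy_nz; rewrite x0 xpair_eqE eqxx /= mul0r mul1r sub0r opprK.
by rewrite mul1r mul0r subr0.
Qed.

Lemma similar_of_common_root A1 A2 A3 (x y : F) : (x, y) != (0, 0) ->
  qeval (eigenform A1) x y = 0 -> qeval (eigenform A2) x y = 0 ->
  qeval (eigenform A3) x y = 0 -> similar_to_upper_tri A1 A2 A3.
Proof.
move=> xy_nz e1 e2 e3; have [P [P_unit P10 P11]] := unitmx_with_row1 xy_nz.
have det_nz : \det P != 0 by rewrite -unitfE -unitmxE.
have conj_ut A : qeval (eigenform A) x y = 0 -> upper_tri (P *m A *m invmx P).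
  move=> eA; apply/upper_tri2P; apply: (mulfI det_nz).
  by rewrite mulr0 det_mulmx_conj10 // P11 P10 opprK.
by exists P; split=> //; split; apply: conj_ut.
Qed.

End Eigenform.

Lemma similar_of_sigma_Delta_eq0 (F : closedFieldType) (A1 A2 A3 : 'M[F]_2) :
  (2 : F) != 0 ->
  [/\ sigma A1 A2 = 0, sigma A1 A3 = 0, sigma A2 A3 = 0 & Delta A1 A2 A3 = 0] ->
  similar_to_upper_tri A1 A2 A3.
Proof.
move=> two_nz [s12 s13 s23 d0]; rewrite !sigma_qres // in s12 s13 s23.
have det0 : qdet (eigenform A1) (eigenform A2) (eigenform A3) = 0.
  by apply/eqP; rewrite -sqrf_eq0 -Delta_qdet d0.
have [x [y [xy_nz [e1 e2 e3]]]] := common_root3 s12 s13 s23 det0.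
exact: similar_of_common_root xy_nz e1 e2 e3.
Qed.

Theorem corollary2p11 (R : realType) (A1 A2 A3 : 'M[R[i]]_2) :
  similar_to_upper_tri A1 A2 A3 <->
  [/\ sigma A1 A2 = 0, sigma A1 A3 = 0, sigma A2 A3 = 0 & Delta A1 A2 A3 = 0].
Proof.
have two_nz : (2 : R[i]) != 0 by rewrite pnatr_eq0.
split; [exact: sigma_Delta_eq0_of_similar | exact: similar_of_sigma_Delta_eq0].
Qed.
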